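(* Let $V$ be a vector space (of arbitrary dimension) over a field $K$, let $R=\mathrm{End}_K(V)$, and let $a\in R$. Then there exists an idempotent $e\in aRa$ such that $(a(1-e))^2=0$.
   Context: Elements of $\mathrm{End}_K(V)$ act on the left of $V$, and the ring multiplication is composition. *)

From HB Require Import structures.
From mathcomp Require Import all_boot all_order all_algebra.
Set Implicit Arguments. Unset Strict Implicit. Unset Printing Implicit Defensive.
Import GRing.Theory.
Local Open Scope ring_scope.

(* End_K(V): K-linear endomorphisms of a K-vector space V (any dimension),
   acting on the left; ring product = composition, 1 = identity. *)
Notation endo V := {linear V -> V}.

(* Write U = im a and N = ker a.  Choose a complement D of U ∩ N and let e be a
   projection of V onto C = U ∩ D along a subspace containing N (possible since
   C ∩ N = 0).  Every x in U splits as x = m + c with m in U ∩ N and c in C, so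
   x - e x = m is killed by a, which gives (a(1 - e))^2 = 0.  Since e kills N
   and has image in U, it is absorbed by any inner inverse b of a (a b a = a):
   e = e b a = a b e, whence e = a (b e b) a.  Complements and linear maps
   defined by choice replace bases. *)
From HB Require Import structures.
From mathcomp Require Import all_boot all_order all_algebra.
From mathcomp Require Import boolp classical_sets.
Set Implicit Arguments.
Unset Strict Implicit.
Unset Printing Implicit Defensive.
Import GRing.Theory.
Local Open Scope ring_scope.
Local Open Scope classical_set_scope.

Section Subspaces.
Variables (K : fieldType) (V : lmodType K).
Implicit Types (A B C : set V).

Definition subspace A := A 0 /\ forall k x y, A x -> A y -> A (k *: x + y).

Lemma subspaceD A x y : subspace A -> A x -> A y -> A (x + y).
Proof. by case=> _ clA Ax Ay; have := clA 1 x y Ax Ay; rewrite scale1r. Qed.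

Lemma subspaceZ A k x : subspace A -> A x -> A (k *: x).
Proof. by case=> A0 clA Ax; have := clA k x 0 Ax A0; rewrite addr0. Qed.

Lemma subspaceN A x : subspace A -> A x -> A (- x).
Proof. by rewrite -scaleN1r; apply: subspaceZ. Qed.

Lemma subspaceB A x y : subspace A -> A x -> A y -> A (x - y).
Proof. by move=> spA Ax Ay; apply: subspaceD => //; apply: subspaceN. Qed.

Lemma subspace0 : subspace [set 0].
Proof. by split=> // k x y -> ->; rewrite scaler0 addr0. Qed.

Lemma subspaceI A B : subspace A -> subspace B -> subspace (A `&` B).
Proof.
move=> [A0 clA] [B0 clB]; split=> // k x y [Ax Bx] [Ay By].
by split; [apply: clA | apply: clB].
Qed.

Lemma subspace_add A B :
  subspace A -> subspace B -> subspace [set x + y | x in A & y in B].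
Proof.
move=> [A0 clA] [B0 clB]; split; first by exists 0 => //; exists 0; rewrite ?addr0.
move=> k _ _ [x1 Ax1 [y1 By1 <-]] [x2 Ax2 [y2 By2 <-]].
exists (k *: x1 + x2); first exact: clA.
by exists (k *: y1 + y2); [apply: clB | rewrite scalerDr addrACA].
Qed.

Lemma subspace_kernel (f : {linear V -> V}) : subspace [set v | f v = 0].
Proof.
split=> [|k x y fx fy] /=; first by rewrite linear0.
by rewrite linearP fx fy scaler0 addr0.
Qed.

Lemma subspace_range (f : {linear V -> V}) : subspace (range f).
Proof.
split; first by exists 0; rewrite ?linear0.
by move=> k _ _ [x _ <-] [y _ <-]; exists (k *: x + y); rewrite ?linearP.
Qed.

Lemma exists_linear (f : V -> V) : linear f -> exists g : {linear V -> V}, g =1 f.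
Proof.
by move=> linf; exists (HB.pack_for {linear V -> V} f (GRing.isLinear.Build K V V *:%R f linf)).
Qed.

(* [B] is a maximal set closed under [k *: x + y] and meeting [A] only in 0; it
   cannot miss a vector [v] of [A + B], otherwise [B + K v] would be larger.
   [P] does not ask for [B 0]: the empty chain has the empty union. *)
Lemma exists_complement A : subspace A ->
  exists B, [/\ subspace B, A `&` B `<=` [set 0]
              & setT `<=` [set x + y | x in A & y in B]].
Proof.
move=> spA.
pose P B := (forall k x y, B x -> B y -> B (k *: x + y)) /\ A `&` B `<=` [set 0].
have [|B [[clB disB] maxB]] := @Zorn_bigcup V P.
  move=> F FP totF; split => [k x y [X FX Xx] [Y FY Yy]|x [Ax [X FX Xx]]].
    have [XY|YX] := totF _ _ FX FY.
      by exists Y => //; apply: (FP _ FY).1 => //; apply: XY.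
    by exists X => //; apply: (FP _ FX).1 => //; apply: YX.
  by apply: (FP _ FX).2.
have B0 : B 0.
  apply: contrapT => nB0; have noB x : ~ B x.
    by move=> Bx; apply: nB0; rewrite -(addNr x) -scaleN1r; apply: clB.
  apply: (maxB [set 0]); first by split=> [x /noB|/(_ 0 erefl)].
  by rewrite /P; split=> [k x y -> ->|x [_ ->]]; rewrite ?scaler0 ?addr0.
have spB : subspace B by [].
exists B; split=> // v _; apply: contrapT => nv.
pose Bv := [set b + k *: v | b in B & k in @setT K].
apply: (maxB Bv); first split.
- by move=> b Bb; exists b => //; exists 0; rewrite ?scale0r ?addr0.
- move=> BvB; apply: nv; exists 0; first by case: spA.
  exists v; rewrite ?add0r //; apply: BvB.
  by exists 0 => //; exists 1; rewrite ?scale1r ?add0r.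
rewrite /P; split.
- move=> k _ _ [b1 Bb1 [k1 _ <-]] [b2 Bb2 [k2 _ <-]].
  exists (k *: b1 + b2); first exact: clB.
  by exists (k * k1 + k2); rewrite // scalerDr scalerDl scalerA addrACA.
- move=> x [Ax [b Bb [k _ xE]]]; have [k0|k0] := eqVneq k 0.
    by rewrite k0 scale0r addr0 in xE; subst x; apply: disB.
  exfalso; apply: nv; exists (k^-1 *: x); first exact: subspaceZ.
  exists (- (k^-1 *: b)); first by apply: subspaceN => //; apply: subspaceZ.
  by rewrite -xE scalerDr scalerA mulVf // scale1r addrAC subrr add0r.
Qed.

Lemma exists_projection_direct A B : subspace A -> subspace B ->
  A `&` B `<=` [set 0] -> setT `<=` [set x + y | x in A & y in B] ->
  exists p : {linear V -> V},
    [/\ forall x, A x -> p x = x, forall y, B y -> p y = 0 & forall v, A (p v)].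
Proof.
move=> spA spB disAB spanAB.
have decomp_uniq v x1 x2 : A x1 -> A x2 -> B (v - x1) -> B (v - x2) -> x1 = x2.
  move=> Ax1 Ax2 Bv1 Bv2; apply/eqP; rewrite -subr_eq0; apply/eqP/disAB.
  split; first exact: subspaceB.
  have -> : x1 - x2 = (v - x2) - (v - x1) by rewrite opprB [RHS]addrC addrA subrK.
  exact: subspaceB.
have decomp v : exists x, A x /\ B (v - x).
  by have [x Ax [y By <-]] := spanAB v I; exists x; rewrite addrAC subrr add0r.
pose p v := sval (cid (decomp v)).
have pA v : A (p v) by rewrite /p; case: cid => ? [].
have pB v : B (v - p v) by rewrite /p; case: cid => ? [].
have [q qE] : exists q : {linear V -> V}, q =1 p.
  apply: exists_linear => k u w; apply: (decomp_uniq (k *: u + w)) => //.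
  - by case: spA => _; apply.
  - rewrite opprD addrACA -scalerBr.
    by apply: subspaceD => //; apply: subspaceZ.
exists q; split=> [x Ax|y By|v]; rewrite qE.
- by apply: (decomp_uniq x) => //; rewrite subrr; case: spB.
- by apply: (decomp_uniq y) => //; [case: spA | rewrite subr0].
- exact: pA.
Qed.

Lemma exists_projection A B : subspace A -> subspace B -> A `&` B `<=` [set 0] ->
  exists p : {linear V -> V},
    [/\ forall x, A x -> p x = x, forall y, B y -> p y = 0 & forall v, A (p v)].
Proof.
move=> spA spB disAB.
have [C [spC disC spanC]] := exists_complement (subspace_add spA spB).
pose BC := [set y + c | y in B & c in C].
have [|||p [pA pB pV]] := @exists_projection_direct A BC spA.
- exact: subspace_add.
- move=> x [Ax [y By [c Cc xE]]].
  have c0 : c = 0.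
    apply: disC; split=> //; exists x => //; exists (- y); first exact: subspaceN.
    by rewrite -xE addrC addKr.
  by apply: disAB; split=> //; rewrite -xE c0 addr0.
- move=> v _; have [_ [x Ax [y By <-]] [c Cc <-]] := spanC v I.
  by exists x => //; exists (y + c); [exists y => //; exists c | rewrite addrA].
exists p; split=> // y By; apply: pB; exists y => //; exists 0; rewrite ?addr0 //.
by case: spC.
Qed.

Lemma exists_projection_onto A : subspace A ->
  exists p : {linear V -> V}, (forall x, A x -> p x = x) /\ forall v, A (p v).
Proof.
move=> spA; have [|p [pA _ pV]] := exists_projection spA subspace0.
  by move=> x [_ ->].
by exists p.
Qed.

End Subspaces.

Section InnerInverse.
Variables (K : fieldType) (V : lmodType K) (a : {linear V -> V}).

Lemma exists_inner_inverse : exists b : {linear V -> V}, a \o b \o a =1 a.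
Proof.
have [pU [pUU pUV]] := exists_projection_onto (subspace_range a).
have [pN [pNN pNV]] := exists_projection_onto (subspace_kernel a).
have pre z : exists w, a w = pU z by have [w _ <-] := pUV z; exists w.
pose w z := sval (cid (pre z)).
have aw z : a (w z) = pU z by rewrite /w; case: cid.
(* [w] is only determined up to [ker a], which [1 - pN] kills. *)
have [b bE] : exists b : {linear V -> V}, b =1 fun z => w z - pN (w z).
  apply: exists_linear => k u v.
  pose d := w (k *: u + v) - (k *: w u + w v).
  have Nd : a d = 0 by rewrite /d linearB linearP !aw linearP subrr.
  rewrite -[w (k *: u + v)](subrK (k *: w u + w v)) -/d.
  by rewrite linearD pNN // [d + _]addrC addrKA linearP opprD addrACA scalerBr.
exists b => v /=; rewrite bE linearB aw pNV subr0.
by apply: pUU; exists v.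
Qed.

Lemma inner_inverse_corner (b e : {linear V -> V}) :
  a \o b \o a =1 a -> (forall v, a v = 0 -> e v = 0) ->
  (forall v, range a (e v)) -> e =1 a \o (b \o e \o b) \o a.
Proof.
move=> aba eker erange v /=.
have eba : e (b (a v)) = e v.
  apply/eqP; rewrite -subr_eq0 -linearB; apply/eqP/eker.
  by rewrite linearB [a (b _)]aba subrr.
have abe x : a (b (e x)) = e x by have [w _ <-] := erange x; apply: aba.
by rewrite eba abe.
Qed.

Lemma exists_corner_idempotent : exists e : {linear V -> V},
  [/\ e \o e =1 e, forall v, a v = 0 -> e v = 0, forall v, range a (e v)
    & forall x, range a x -> a (x - e x) = 0].
Proof.
pose U := range a; pose N := [set v | a v = 0].
have spU : subspace U := subspace_range a.
have spN : subspace N := subspace_kernel a.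
have [D [spD disD spanD]] := exists_complement (subspaceI spU spN).
pose C := U `&` D.
have [|e [eC eN eV]] := @exists_projection _ _ C N (subspaceI spU spD) spN.
  by move=> x [[Ux Dx] Nx]; apply: disD.
have split_range x : U x -> exists2 m, N m & C (x - m).
  move=> Ux; have [m [Um Nm] [d Dd xE]] := spanD x I.
  have dE : d = x - m by rewrite -xE addrAC subrr add0r.
  by exists m => //; rewrite -dE; split=> //; rewrite dE; apply: subspaceB.
exists e; split=> [v /=|v|v|x Ux]; first by rewrite eC.
- exact: eN.
- by case: (eV v).
have [m Nm Cxm] := split_range x Ux.
have exm : e x = x - m by rewrite -{1}(subrK m x) linearD eC // eN // addr0.
by rewrite exm opprB addrC subrK.
Qed.

End InnerInverse.

Theorem lemma2p9 (K : fieldType) (V : lmodType K) (a : {linear V -> V}) :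
  exists (r : {linear V -> V}) (e : V -> V),
    e =1 a \o r \o a /\
    e \o e =1 e /\
    (a \o (fun v => v - e v)) \o (a \o (fun v => v - e v)) =1 (fun _ => 0).
Proof.
have [b aba] := exists_inner_inverse a.
have [e [ee eker erange eU]] := exists_corner_idempotent a.
exists (b \o e \o b : {linear V -> V}), e; split.
  exact: inner_inverse_corner.
by split=> // v /=; apply: eU; exists (v - e v).
Qed.
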